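(* Preferred semantics is serialisable with the selection function $\alpha_{adm}(X,Y,Z)=X\cup Y\cup Z$ and the termination function $\beta_{pr}(F,S)=1$ if $\mathrm{IS}(F)=\emptyset$ and $\beta_{pr}(F,S)=0$ otherwise.
   Context: An abstract argumentation framework (AF) is a pair $F=(A,R)$ with $A$ a finite subset of a fixed universal set of arguments $\mathfrak{A}$ and $R\subseteq A\times A$ ($a\to b$ means $(a,b)\in R$). For $S\subseteq A$: $S^+=\{a\mid \exists b\in S: b\to a\}$, $S^-=\{a\mid\exists b\in S: a\to b\}$; for sets $S,S'$, $S\to S'$ means $S^+\cap S'\neq\emptyset$. $S$ is admissible if it is conflict-free and every attacker of an element of $S$ is attacked by some element of $S$. A preferred extension is an inclusion-maximal admissible set. An initial set is a non-empty admissible set with no non-empty admissible proper subset; $\mathrm{IS}(F)$ is the set of initial sets. An initial set $S$ is unattacked if $S^-=\emptyset$; unchallenged if $S^-\neq\emptyset$ and no $S'\in\mathrm{IS}(F)$ has $S'\to S$; challenged if some $S'\in\mathrm{IS}(F)$ has $S'\to S$. Write $\mathrm{IS}^{u}(F),\mathrm{IS}^{uc}(F),\mathrm{IS}^{c}(F)$ for these sets. The reduct is $F^S=(A',R\cap(A'\times A'))$ with $A'=A\setminus(S\cup S^+)$. A selection function $\alpha$ maps any three sets $X,Y,Z$ of sets of arguments to a subset of $X\cup Y\cup Z$; a termination function $\beta$ maps pairs $(F,S)$ to $\{0,1\}$. Transitions: $(F,S)\to(F^{S'},S\cup S')$ whenever $S'\in\alpha(\mathrm{IS}^u(F),\mathrm{IS}^{uc}(F),\mathrm{IS}^c(F))$.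 $(F,S)\leadsto^{\alpha,\beta}(F',S')$ means $(F',S')$ is reachable from $(F,S)$ in finitely many (possibly zero) transitions and $\beta(F',S')=1$. $\mathcal{E}^{\alpha,\beta}(F)$ is the set of all $S$ with $(F,\emptyset)\leadsto^{\alpha,\beta}(F',S)$ for some $F'$. A semantics $\sigma$ is serialisable with $\alpha,\beta$ if $\sigma(F)=\mathcal{E}^{\alpha,\beta}(F)$ for all AFs $F$. *)

From HB Require Import structures.
From mathcomp Require Import all_boot finmap.

Set Implicit Arguments.
Unset Strict Implicit.
Unset Printing Implicit Defensive.

Local Open Scope fset_scope.

Section AFDefs.
Variable T : choiceType.

Definition AF := ({fset T} * {fset (T * T)})%type.

Definition wf_AF (F : AF) : Prop :=
  forall a b, (a, b) \in F.2 -> a \in F.1 /\ b \in F.1.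

Definition att (F : AF) (a b : T) : bool := (a, b) \in F.2.

Definition in_plus (F : AF) (S : {fset T}) (a : T) : bool :=
  [exists b : S, att F (val b) a].

Definition in_minus (F : AF) (S : {fset T}) (a : T) : bool :=
  [exists b : S, att F a (val b)].

Definition set_att (F : AF) (S S' : {fset T}) : Prop :=
  exists a, in_plus F S a /\ a \in S'.

Definition conflict_free (F : AF) (S : {fset T}) : Prop :=
  forall a b, a \in S -> b \in S -> ~ att F a b.

Definition admissible (F : AF) (S : {fset T}) : Prop :=
  S `<=` F.1 /\ conflict_free F S /\
  forall a b, b \in S -> att F a b -> exists2 c, c \in S & att F c a.

Definition preferred (F : AF) (S : {fset T}) : Prop :=
  admissible F S /\ forall S', admissible F S' -> S `<=` S' -> S' = S.

Definition initial (F : AF) (S : {fset T}) : Prop :=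
  admissible F S /\ S != fset0 /\
  forall S', admissible F S' -> S' != fset0 -> S' `<` S -> False.

Definition IS_u (F : AF) (S : {fset T}) : Prop :=
  initial F S /\ forall a, ~~ in_minus F S a.

Definition IS_uc (F : AF) (S : {fset T}) : Prop :=
  initial F S /\ (exists a, in_minus F S a) /\
  forall S', initial F S' -> ~ set_att F S' S.

Definition IS_c (F : AF) (S : {fset T}) : Prop :=
  initial F S /\ exists2 S', initial F S' & set_att F S' S.

Definition reduct (F : AF) (S : {fset T}) : AF :=
  let A' := [fset a in F.1 | (a \notin S) && ~~ in_plus F S a] in
  (A', [fset p in F.2 | (p.1 \in A') && (p.2 \in A')]).

(* A selection function maps three families to a subfamily of
   their union; a termination function is represented as a Prop-valued
   predicate ("beta(F,S) = 1"). *)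
Definition family := {fset T} -> Prop.
Definition selection := family -> family -> family -> family.
Definition selection_ok (alpha : selection) : Prop :=
  forall X Y Z S, alpha X Y Z S -> X S \/ Y S \/ Z S.
Definition termination := AF -> {fset T} -> Prop.

Definition state := (AF * {fset T})%type.

Definition step (alpha : selection) (s s' : state) : Prop :=
  exists S', alpha (IS_u s.1) (IS_uc s.1) (IS_c s.1) S' /\
             s' = (reduct s.1 S', s.2 `|` S').

Inductive reach (alpha : selection) : state -> state -> Prop :=
| reach_refl s : reach alpha s s
| reach_step s s' s'' : step alpha s s' -> reach alpha s' s'' -> reach alpha s s''.

Definition serial_ext (alpha : selection) (beta : termination) (F : AF)
  (S : {fset T}) : Prop :=
  exists F', reach alpha (F, fset0) (F', S) /\ beta F' S.

Definition alpha_adm : selection := fun X Y Z S => X S \/ Y S \/ Z S.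

Definition beta_pr : termination := fun F _ => forall S, ~ initial F S.

End AFDefs.

From HB Require Import structures.
From mathcomp Require Import all_boot finmap.
From Stdlib Require Import Classical.

(* For admissible S, the admissible sets of the reduct F^S correspond to the
   admissible supersets of S in F, via S' ↦ S ∪ S' and S' ↦ S' \ S.  Hence an
   admissible S is preferred iff F^S has no non-empty admissible set, i.e. no
   initial set.  Since (F^S)^I = F^(S ∪ I), every run of the serialisation
   visits only states (F^S, S) with S admissible; conversely any admissible S
   is reached from ∅ by repeatedly adding an initial set of F^S0 inside the
   non-empty admissible set S \ S0 of F^S0. *)

Set Implicit Arguments.
Unset Strict Implicit.
Unset Printing Implicit Defensive.
Local Open Scope fset_scope.

Section Serialisation.
Variable T : choiceType.
Implicit Types (F : AF T) (S I : {fset T}).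

Lemma in_plusP F S a : reflect (exists2 b, b \in S & att F b a) (in_plus F S a).
Proof.
apply: (iffP existsP) => [[b Fba]|[b bS Fba]]; last by exists [` bS].
by exists (fsval b) => //; apply: fsvalP.
Qed.

Lemma in_plusU F S S' a : in_plus F (S `|` S') a = in_plus F S a || in_plus F S' a.
Proof.
apply/in_plusP/orP => [[b]|[|]/in_plusP[b bS Fba]]; last 2 first.
- by exists b; rewrite ?inE ?bS.
- by exists b; rewrite ?inE ?bS ?orbT.
by rewrite inE => /orP[] bS Fba; [left | right]; apply/in_plusP; exists b.
Qed.

Lemma mem_reduct F S a :
  (a \in (reduct F S).1) = [&& a \in F.1, a \notin S & ~~ in_plus F S a].
Proof. by rewrite inE. Qed.

Lemma mem_reduct_rel F S p :
  (p \in (reduct F S).2) =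
  [&& p \in F.2, p.1 \in (reduct F S).1 & p.2 \in (reduct F S).1].
Proof. by rewrite {1}/reduct inE. Qed.

Lemma att_reduct F S a b :
  att (reduct F S) a b = [&& att F a b, a \in (reduct F S).1 & b \in (reduct F S).1].
Proof. exact: mem_reduct_rel. Qed.

Lemma reduct_notin F S I a : I `<=` (reduct F S).1 -> a \in I -> a \notin S.
Proof. by move=> /fsubsetP IR /IR; rewrite mem_reduct => /and3P[]. Qed.

Lemma reduct_unattacked F S I a : I `<=` (reduct F S).1 -> a \in I -> ~ in_plus F S a.
Proof. by move=> /fsubsetP IR /IR; rewrite mem_reduct => /and3P[_ _ /negP]. Qed.

Lemma in_plus_reduct F S S' a : S' `<=` (reduct F S).1 -> a \in (reduct F S).1 ->
  in_plus (reduct F S) S' a = in_plus F S' a.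
Proof.
move=> /fsubsetP S'R aR.
apply/in_plusP/in_plusP => -[b bS' Fba]; exists b => //.
  by move: Fba; rewrite att_reduct => /andP[].
by rewrite att_reduct Fba aR S'R.
Qed.

Lemma reduct_fset0 F : wf_AF F -> reduct F fset0 = F.
Proof.
move=> wfF.
have no_att a : in_plus F fset0 a = false.
  by apply/negbTE/in_plusP => -[b]; rewrite inE.
have args : (reduct F fset0).1 = F.1.
  by apply/fsetP => a; rewrite mem_reduct no_att inE andbT.
rewrite [LHS]surjective_pairing [RHS]surjective_pairing args; congr pair.
apply/fsetP => -[a b]; rewrite mem_reduct_rel args /=.
by case: (boolP (_ \in F.2)) => //= /wfF[-> ->].
Qed.

Lemma reduct_reduct F S S' : S' `<=` (reduct F S).1 ->
  reduct (reduct F S) S' = reduct F (S `|` S').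
Proof.
move=> S'R.
have args : (reduct (reduct F S) S').1 = (reduct F (S `|` S')).1.
  apply/fsetP => a; rewrite mem_reduct.
  case: (boolP (a \in (reduct F S).1)) => aR.
    rewrite in_plus_reduct //; move: aR.
    by rewrite !mem_reduct in_plusU inE !negb_or => /and3P[-> -> ->].
  apply/esym/negbTE; apply: contra aR.
  by rewrite !mem_reduct in_plusU inE !negb_or => /and3P[-> /andP[-> _] /andP[-> _]].
rewrite [LHS]surjective_pairing [RHS]surjective_pairing args; congr pair.
have argsR a : a \in (reduct (reduct F S) S').1 -> a \in (reduct F S).1.
  by rewrite mem_reduct => /and3P[].
apply/fsetP => p; rewrite !mem_reduct_rel -args.
case: (boolP (p.1 \in (reduct (reduct F S) S').1)) => [p1R|]; last by rewrite !andbF.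
case: (boolP (p.2 \in (reduct (reduct F S) S').1)) => [p2R|]; last by rewrite !andbF.
by rewrite (argsR _ p1R) (argsR _ p2R) !andbT.
Qed.

Lemma admissible0 F : admissible F fset0.
Proof. by split; [exact: fsub0set | split=> a b; rewrite inE]. Qed.

Lemma admissibleU_reduct F S S' : wf_AF F -> admissible F S ->
  admissible (reduct F S) S' -> admissible F (S `|` S').
Proof.
move=> wfF [SF [cfS defS]] [S'R [cfS' defS']].
have S'F : S' `<=` F.1.
  by apply/fsubsetP => a /(fsubsetP S'R); rewrite mem_reduct => /and3P[].
split; [|split].
- by rewrite fsubUset SF S'F.
- move=> a b; rewrite !inE => /orP[] aS /orP[] bS Fab.
  + exact: cfS Fab.
  + by apply: (reduct_unattacked S'R bS); apply/in_plusP; exists a.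
  + have [c cS Fca] := defS a b bS Fab.
    by apply: (reduct_unattacked S'R aS); apply/in_plusP; exists c.
  + by apply: (cfS' a b aS bS); rewrite att_reduct Fab !(fsubsetP S'R).
- move=> a b; rewrite inE => /orP[bS|bS'] Fab.
    by have [c cS Fca] := defS a b bS Fab; exists c; rewrite ?inE ?cS.
  have [aF _] := wfF a b Fab.
  case: (boolP (a \in S)) => [aS|aNS].
    by case: (reduct_unattacked S'R bS'); apply/in_plusP; exists a.
  case: (boolP (in_plus F S a)) => [/in_plusP[c cS Fca]|aNSp].
    by exists c; rewrite ?inE ?cS.
  have aR : a \in (reduct F S).1 by rewrite mem_reduct aF aNS aNSp.
  have [|c cS' Rca] := defS' a b bS'; first by rewrite att_reduct Fab aR (fsubsetP S'R).
  by exists c; rewrite ?inE ?cS' ?orbT //; move: Rca; rewrite att_reduct => /andP[].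
Qed.

Lemma admissible_reductD F S S' : admissible F S -> admissible F S' -> S `<=` S' ->
  admissible (reduct F S) (S' `\` S).
Proof.
move=> [SF [cfS defS]] [S'F [cfS' defS']] SS'.
have S'R a : a \in S' `\` S -> a \in (reduct F S).1.
  rewrite inE mem_reduct => /andP[-> aS']; rewrite (fsubsetP S'F) //=.
  by apply/in_plusP => -[c cS]; apply: cfS' aS'; apply: (fsubsetP SS').
split; [|split].
- exact/fsubsetP.
- move=> a b aD bD; rewrite att_reduct S'R // S'R // !andbT.
  by move: aD bD; rewrite !inE => /andP[_ aS'] /andP[_ bS']; apply: cfS'.
- move=> a b bD; rewrite att_reduct => /and3P[Fab aR _].
  have [c cS' Fca] := defS' a b (fsubsetP (fsubsetDl S' S) b bD) Fab.
  have cD : c \in S' `\` S.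
    rewrite inE cS' andbT; apply/negP => cS.
    by move: aR; rewrite mem_reduct => /and3P[_ _ /in_plusP[]]; exists c.
  by exists c; rewrite // att_reduct Fca aR S'R.
Qed.

Lemma initial_admissible F I : initial F I -> admissible F I.
Proof. by case. Qed.

Lemma admissible_initial F S : admissible F S -> S != fset0 ->
  exists2 I, initial F I & I `<=` S.
Proof.
have [n] := ubnP #|`S|; elim: n S => // n IH S /ltnSE cardS adS S0.
case: (classic (exists S', [/\ admissible F S', S' != fset0 & S' `<` S])).
  move=> [S' [adS' S'0 S'S]].
  have [|I iI IS'] := IH S' _ adS' S'0; first exact: leq_trans (fproper_ltn_card S'S) cardS.
  by exists I; last exact: fsubset_trans IS' (fproper_sub S'S).
move=> noS'; exists S => //; split=> //; split=> // S' adS' S'0 S'S.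
by apply: noS'; exists S'.
Qed.

Lemma initial_reduct_proper F S I : initial (reduct F S) I -> S `<` S `|` I.
Proof.
move=> [[IR _] [I0 _]]; apply: fproperUl; apply/negP => /fsubsetP IS.
by have [a aI] := fset0Pn _ I0; have := reduct_notin IR aI; rewrite IS.
Qed.

Lemma preferred_reductP F S : wf_AF F -> admissible F S ->
  preferred F S <-> beta_pr (reduct F S) S.
Proof.
move=> wfF adS; split=> [[_ maxS] I iI | noI].
  have SI := initial_reduct_proper iI.
  have adSI := admissibleU_reduct wfF adS (initial_admissible iI).
  by move: SI; rewrite (maxS _ adSI (fsubsetUl S I)) fproperEneq eqxx.
split=> // S' adS' SS'; apply/eqP; rewrite eqEfsubset SS' andbT -fsetD_eq0.
apply/negPn/negP => S'S0.
by have [I iI _] := admissible_initial (admissible_reductD adS adS' SS') S'S0; apply: noI iI.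
Qed.

Lemma alpha_admP F I : alpha_adm (IS_u F) (IS_uc F) (IS_c F) I <-> initial F I.
Proof.
split=> [[[]|[[]|[]]] //| iI].
case: (classic (exists a, in_minus F I a)) => [attI|unatt]; last first.
  by left; split=> // a; apply/negP => aI; apply: unatt; exists a.
case: (classic (exists2 I', initial F I' & set_att F I' I)) => [chal|unchal].
  by right; right.
by right; left; split=> //; split=> // I' iI' I'I; apply: unchal; exists I'.
Qed.

Lemma step_reductP F S t :
  step (@alpha_adm T) (reduct F S, S) t <->
  exists2 I, initial (reduct F S) I & t = (reduct F (S `|` I), S `|` I).
Proof.
split=> [[I [/alpha_admP iI ->]] | [I iI ->]]; exists I => //=.
- by rewrite reduct_reduct //; case: iI => -[].
- by split; [apply/alpha_admP | rewrite /= reduct_reduct //; case: iI => -[]].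
Qed.

Lemma reach_admissible F S t : wf_AF F -> admissible F S ->
  reach (@alpha_adm T) (reduct F S, S) t -> admissible F t.2 /\ t.1 = reduct F t.2.
Proof.
move=> wfF + r; move E: (reduct F S, S) r => s0 r.
elim: r S E => [_ S <- | s s' t' st _ IH S E] adS //.
move: st; rewrite -E => /step_reductP[I iI E'].
exact: IH _ (esym E') (admissibleU_reduct wfF adS (initial_admissible iI)).
Qed.

Lemma reach_admissible_superset F S0 S : wf_AF F -> admissible F S0 ->
  admissible F S -> S0 `<=` S -> reach (@alpha_adm T) (reduct F S0, S0) (reduct F S, S).
Proof.
move=> wfF + adS; have [n] := ubnP #|`S `\` S0|.
elim: n S0 => // n IH S0 /ltnSE cardD adS0 S0S.
have [SS0 | D0] := eqVneq (S `\` S0) fset0.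
  suff -> : S0 = S by exact: reach_refl.
  by apply/eqP; rewrite eqEfsubset S0S -fsetD_eq0 SS0.
have [I iI ID] := admissible_initial (admissible_reductD adS0 adS S0S) D0.
have S0I := initial_reduct_proper iI.
have S0IS : S0 `|` I `<=` S by rewrite fsubUset S0S (fsubset_trans ID (fsubsetDl _ _)).
apply: reach_step (IH (S0 `|` I) _ _ S0IS); first by apply/step_reductP; exists I.
  apply: leq_trans cardD; apply: fproper_ltn_card.
  by rewrite fproperD2l // fproper_sub.
exact: admissibleU_reduct wfF adS0 (initial_admissible iI).
Qed.

End Serialisation.

Theorem theorem6 (T : choiceType) (F : AF T) :
  wf_AF F ->
  forall S : {fset T}, preferred F S <-> serial_ext (@alpha_adm T) (@beta_pr T) F S.
Proof.
move=> wfF S; split=> [prS | [F' [r stop]]].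
  have adS := prS.1.
  exists (reduct F S); split; last exact/(preferred_reductP wfF adS).
  rewrite -{1}(reduct_fset0 wfF).
  exact: reach_admissible_superset wfF (admissible0 F) adS (fsub0set S).
rewrite -(reduct_fset0 wfF) in r.
have [/= adS /= F'_def] := reach_admissible wfF (admissible0 F) r.
by apply/(preferred_reductP wfF adS); rewrite -F'_def.
Qed.
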